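(* Let $k$ be a field. Every finitely presented right $\mathrm{RCFM}(k)$-module has projective dimension at most $1$.
   Context: $\mathrm{RCFM}(k)$ is the $k$-algebra of $\mathbb{N}_0\times\mathbb{N}_0$ matrices over $k$ with finitely many nonzero entries in each row and each column. *)

From HB Require Import structures.
From mathcomp Require Import all_boot all_order all_algebra.
From mathcomp Require Import boolp.
From Stdlib Require Import ClassicalEpsilon.
Set Implicit Arguments. Unset Strict Implicit. Unset Printing Implicit Defensive.
Import Order.TTheory GRing.Theory.
Local Open Scope ring_scope.

Section FSum.
Variable R : nzRingType.

Definition fsupp (f : nat -> R) (N : nat) : Prop := forall j, (N <= j)%N -> f j = 0.

Definition fsum (f : nat -> R) : R :=
  \sum_(j < epsilon (inhabits 0%N) (fsupp f)) f j.

Lemma fsupp_le f N M : (N <= M)%N -> fsupp f N -> fsupp f M.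
Proof. by move=> NM h j Mj; apply: h; apply: leq_trans Mj. Qed.

Lemma sum_ext_zero (f : nat -> R) N M : (N <= M)%N -> fsupp f N ->
  \sum_(j < M) f j = \sum_(j < N) f j.
Proof.
move=> NM h; rewrite -(subnKC NM) big_split_ord /= [X in _ + X]big1 ?addr0 // => i _.
by apply: h; rewrite leq_addr.
Qed.

Lemma fsumE f N : fsupp f N -> fsum f = \sum_(j < N) f j.
Proof.
move=> h; rewrite /fsum; set N' := epsilon _ _.
have h' : fsupp f N' by apply: epsilon_spec; exists N.
rewrite -(@sum_ext_zero f N' (maxn N N')) ?leq_maxr //.
by rewrite (@sum_ext_zero f N (maxn N N')) ?leq_maxl.
Qed.

Lemma common_bound (P : nat -> nat -> Prop) :
  (forall l N M, (N <= M)%N -> P l N -> P l M) ->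
  (forall l, exists N, P l N) -> forall n, exists N, forall l, (l < n)%N -> P l N.
Proof.
move=> mono h; elim=> [|n [N HN]]; first by exists 0%N.
have [M HM] := h n; exists (maxn N M) => l; rewrite ltnS leq_eqVlt.
case/orP=> [/eqP->|ln]; first by apply: mono HM; rewrite leq_maxr.
by apply: mono (HN l ln); rewrite leq_maxl.
Qed.

End FSum.

Section RCFM.
Variable k : fieldType.

Definition row_col_finite (A : nat -> nat -> k) : Prop :=
  (forall i, exists N, forall j, (N <= j)%N -> A i j = 0) /\
  (forall j, exists N, forall i, (N <= i)%N -> A i j = 0).

Record rcfm_type := RCFMat { rcfm_mx :> nat -> nat -> k; rcfm_ok : row_col_finite rcfm_mx }.

HB.instance Definition _ := gen_eqMixin rcfm_type.
HB.instance Definition _ := gen_choiceMixin rcfm_type.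

Lemma rcfm_inj (A B : rcfm_type) : rcfm_mx A = rcfm_mx B -> A = B.
Proof.
case: A B => [A hA] [B hB] /= eAB; subst B.
by rewrite (Prop_irrelevance hA hB).
Qed.

Lemma rcfm_ext (A B : rcfm_type) : (forall i j, A i j = B i j) -> A = B.
Proof. by move=> h; apply: rcfm_inj; apply: funext => i; apply: funext => j. Qed.

Lemma rowf (A : rcfm_type) i : exists N, fsupp (A i) N.
Proof. by case: A => A [h1 h2]; exact: h1. Qed.
Lemma colf (A : rcfm_type) j : exists N, fsupp (fun i => A i j) N.
Proof. by case: A => A [h1 h2]; exact: h2. Qed.

Lemma rcf0 : row_col_finite (fun _ _ => 0).
Proof. by split=> ?; exists 0%N. Qed.

Lemma rcfD (A B : rcfm_type) : row_col_finite (fun i j => A i j + B i j).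
Proof.
split=> x.
  have [N hN] := rowf A x; have [M hM] := rowf B x; exists (maxn N M) => j.
  by rewrite geq_max => /andP[/hN-> /hM->]; rewrite addr0.
have [N hN] := colf A x; have [M hM] := colf B x; exists (maxn N M) => j.
by rewrite geq_max => /andP[/hN-> /hM->]; rewrite addr0.
Qed.

Lemma rcfN (A : rcfm_type) : row_col_finite (fun i j => - A i j).
Proof.
split=> x.
  by have [N hN] := rowf A x; exists N => j /hN->; rewrite oppr0.
by have [N hN] := colf A x; exists N => j /hN->; rewrite oppr0.
Qed.

Definition rcfm_zero := RCFMat rcf0.
Definition rcfm_add A B := RCFMat (rcfD A B).
Definition rcfm_opp A := RCFMat (rcfN A).

Lemma rcfm_addA : associative rcfm_add.
Proof. by move=> A B C; apply: rcfm_ext => i j /=; rewrite addrA. Qed.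
Lemma rcfm_addC : commutative rcfm_add.
Proof. by move=> A B; apply: rcfm_ext => i j /=; rewrite addrC. Qed.
Lemma rcfm_add0 : left_id rcfm_zero rcfm_add.
Proof. by move=> A; apply: rcfm_ext => i j /=; rewrite add0r. Qed.
Lemma rcfm_addN : left_inverse rcfm_zero rcfm_opp rcfm_add.
Proof. by move=> A; apply: rcfm_ext => i j /=; rewrite addNr. Qed.

HB.instance Definition _ :=
  GRing.isZmodule.Build rcfm_type rcfm_addA rcfm_addC rcfm_add0 rcfm_addN.

Definition mulf (A B : rcfm_type) i j := fsum (fun l => A i l * B l j).

Lemma mulfE (A B : rcfm_type) i j N : fsupp (A i) N ->
  mulf A B i j = \sum_(l < N) A i l * B l j.
Proof. by move=> h; apply: fsumE => l /h->; rewrite mul0r. Qed.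

Lemma mulfE' (A B : rcfm_type) i j N : fsupp (fun l => B l j) N ->
  mulf A B i j = \sum_(l < N) A i l * B l j.
Proof. by move=> h; apply: fsumE => l /h->; rewrite mulr0. Qed.

Lemma rcfM (A B : rcfm_type) : row_col_finite (mulf A B).
Proof.
split=> x.
  have [N hN] := rowf A x.
  have [M hM] := @common_bound (fun l M => fsupp (B l) M)
     (fun l N M NM h => fsupp_le NM h) (rowf B) N.
  exists M => j Mj; rewrite (mulfE _ _ hN) big1 // => l _.
  by rewrite (hM l (ltn_ord l) j Mj) mulr0.
have [N hN] := colf B x.
have [M hM] := @common_bound (fun l M => fsupp (fun i => A i l) M)
   (fun l N M NM h => fsupp_le NM h) (colf A) N.
exists M => i Mi; rewrite (mulfE' _ _ hN) big1 // => l _.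
by rewrite (hM l (ltn_ord l) i Mi) mul0r.
Qed.

Definition rcfm_mul A B := RCFMat (rcfM A B).

Lemma rcf1 : row_col_finite (fun i j => (i == j)%:R : k).
Proof.
split=> x; exists x.+1 => y xy; case: eqP => // e; subst;
  by rewrite ltnn in xy.
Qed.
Definition rcfm_one := RCFMat rcf1.

Lemma rcfm_mulA : associative rcfm_mul.
Proof.
move=> A B C; apply: rcfm_ext => i j /=.
have [N hN] := rowf A i.
have [L hL] := @common_bound (fun l M => fsupp (B l) M)
   (fun l N M NM h => fsupp_le NM h) (rowf B) N.
rewrite (mulfE _ _ hN).
have hAB : fsupp (mulf A B i) L.
  move=> l Ll; rewrite (mulfE _ _ hN) big1 // => m _.
  by rewrite (hL m (ltn_ord m) l Ll) mulr0.
rewrite (@mulfE (rcfm_mul A B) C i j L hAB) /=.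
rewrite /rcfm_mul /=; symmetry.
under eq_bigr => l _ do rewrite (mulfE _ _ hN) mulr_suml.
rewrite exchange_big /=; apply: eq_bigr => m _.
rewrite (mulfE _ _ (hL m (ltn_ord m))) mulr_sumr; apply: eq_bigr => l _.
by rewrite mulrA.
Qed.

Lemma rcfm_mul1 : left_id rcfm_one rcfm_mul.
Proof.
move=> A; apply: rcfm_ext => i j /=.
rewrite (@mulfE rcfm_one A i j i.+1); last first.
  by move=> l il /=; case: eqP => // e; subst; rewrite ltnn in il.
rewrite big_ord_recr /= eqxx mul1r big1 ?add0r // => l _.
by rewrite /= eq_sym (ltn_eqF (ltn_ord l)) mul0r.
Qed.

Lemma rcfm_mulr1 : right_id rcfm_one rcfm_mul.
Proof.
move=> A; apply: rcfm_ext => i j /=.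
rewrite (@mulfE' A rcfm_one i j j.+1); last first.
  by move=> l il /=; case: eqP => // e; subst; rewrite ltnn in il.
rewrite big_ord_recr /= eqxx mulr1 big1 ?add0r // => l _.
by rewrite /= (ltn_eqF (ltn_ord l)) mulr0.
Qed.

Lemma rcfm_mulDl : left_distributive rcfm_mul rcfm_add.
Proof.
move=> A B C; apply: rcfm_ext => i j /=.
have [N hN] := colf C j.
rewrite (mulfE' _ _ hN) (mulfE' _ _ hN) (@mulfE' B C i j N hN).
by rewrite -big_split /=; apply: eq_bigr => l _; rewrite mulrDl.
Qed.

Lemma rcfm_mulDr : right_distributive rcfm_mul rcfm_add.
Proof.
move=> A B C; apply: rcfm_ext => i j /=.
have [N hN] := rowf A i.
rewrite (mulfE _ _ hN) (mulfE _ _ hN) (@mulfE A C i j N hN).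
by rewrite -big_split /=; apply: eq_bigr => l _; rewrite mulrDr.
Qed.

Lemma rcfm_one_neq0 : rcfm_one != 0.
Proof.
apply/eqP => e; have := congr1 (fun A : rcfm_type => A 0%N 0%N) e.
by rewrite /rcfm_one /= => /eqP; rewrite oner_eq0.
Qed.

HB.instance Definition _ := GRing.Zmodule_isNzRing.Build rcfm_type
  rcfm_mulA rcfm_mul1 rcfm_mulr1 rcfm_mulDl rcfm_mulDr rcfm_one_neq0.

End RCFM.

Definition RCFM (k : fieldType) : nzRingType := rcfm_type k.

(* Right modules over a ring R are left modules over the converse ring *)
(* R^c (scalar action a *: m stands for m . a).                        *)
Notation rmodType R := (lmodType (GRing.converse R)).

Section RightModules.
Variable R : nzRingType.

Definition rhom (U V : rmodType R) (f : U -> V) : Prop :=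
  (forall x y, f (x + y) = f x + f y) /\ (forall a x, f (a *: x) = a *: f x).

Definition onto (U V : Type) (f : U -> V) : Prop := forall y, exists x, f x = y.

Definition rprojective (P : rmodType R) : Prop :=
  forall (N Q : rmodType R) (g : N -> Q) (f : P -> Q),
    rhom g -> onto g -> rhom f ->
    exists h : P -> N, rhom h /\ forall x, g (h x) = f x.

Definition rfinitely_presented (M : rmodType R) : Prop :=
  exists (n : nat) (p : 'rV[GRing.converse R]_n -> M),
    rhom p /\ onto p /\
    exists (m : nat) (v : 'I_m -> 'rV[GRing.converse R]_n),
      (forall i, p (v i) = 0) /\
      (forall x, p x = 0 ->
         exists c : 'I_m -> GRing.converse R, x = \sum_(i < m) c i *: v i).

Definition rpd_le1 (M : rmodType R) : Prop :=
  exists (P0 P1 : rmodType R) (d : P1 -> P0) (e : P0 -> M),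
    rprojective P0 /\ rprojective P1 /\ rhom d /\ rhom e /\
    injective d /\ onto e /\
    (forall x, e x = 0 <-> exists y, x = d y).

End RightModules.

From Pilot Require Import Defs.
From HB Require Import structures.
From mathcomp Require Import all_boot all_algebra.
From mathcomp Require Import boolp functions.
From Stdlib Require Import ClassicalEpsilon.
Set Implicit Arguments. Unset Strict Implicit. Unset Printing Implicit Defensive.
Import GRing.Theory.
Local Open Scope ring_scope.

(* Write R for RCFM(k). Two properties of R suffice.
   First, R^m is a retract of R_R for every m: split N_0 into residue classes.
   Packing R^m and R^n into R in this way turns the map R^m -> R^n,
   c |-> \sum_i v_i c_i, onto the relations of a presentation of M into left
   multiplication by a single element rho.
   Second, the right annihilator of every a in R is eR for some e with ae = 0.
   For a = rho, the element 1 - e splits the surjection from R^m onto the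
   relation module, which is therefore projective, and
   0 -> relations -> R^n -> M -> 0 is the required resolution.
   For the second property, let K be the finitely supported vectors killed by
   the rows of a and L its orthogonal among finitely supported vectors.  A
   back-and-forth construction gives vectors gamma_j, delta_i with
   e_j - gamma_j in K, e_i - delta_i in L and <gamma_j, delta_i> = 0; the matrix
   with columns e_j - gamma_j then has rows delta_i, so it lies in R, and it is
   the required e. *)

Section RightModuleMaps.
Variable R : nzRingType.
Implicit Types U V W : rmodType R.

Lemma rhom0 U V (f : U -> V) : rhom f -> f 0 = 0.
Proof. by case=> _ fZ; rewrite -(scale0r (0 : U)) fZ scale0r. Qed.

Lemma rhomN U V (f : U -> V) x : rhom f -> f (- x) = - f x.
Proof. by case=> _ fZ; rewrite -scaleN1r fZ scaleN1r. Qed.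

Lemma rhomB U V (f : U -> V) x y : rhom f -> f (x - y) = f x - f y.
Proof. by move=> hf; rewrite hf.1 rhomN. Qed.

Lemma rhom_sum U V (f : U -> V) m (F : 'I_m -> U) : rhom f ->
  f (\sum_(i < m) F i) = \sum_(i < m) f (F i).
Proof.
move=> hf; elim: m F => [|m IH] F; first by rewrite !big_ord0 rhom0.
by rewrite !big_ord_recr hf.1 IH.
Qed.

Lemma rhom_comp U V W (f : U -> V) (g : V -> W) :
  rhom f -> rhom g -> rhom (fun x => g (f x)).
Proof. by move=> hf hg; split=> [x y|c x]; rewrite ?hf.1 ?hg.1 // hf.2 hg.2. Qed.

Lemma rprojective_rV n : rprojective ('rV[GRing.converse R]_n : rmodType R).
Proof.
move=> N Q g f hg g_onto hf.
have [lift liftK] := boolp.choice (fun i : 'I_n => g_onto (f (delta_mx 0 i))).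
exists (fun x : 'rV_n => \sum_(i < n) x 0 i *: lift i); split; first split.
- by move=> x y; rewrite -big_split; apply: eq_bigr => i _; rewrite mxE scalerDl.
- by move=> c x; rewrite scaler_sumr; apply: eq_bigr => i _; rewrite mxE scalerA.
- move=> x; rewrite rhom_sum // {2}(row_sum_delta x) rhom_sum //.
  by apply: eq_bigr => i _; rewrite hg.2 liftK hf.2.
Qed.

Lemma rprojective_retract U V (r : U -> V) (s : V -> U) :
  rprojective U -> rhom r -> rhom s -> (forall y, r (s y) = y) -> rprojective V.
Proof.
move=> projU hr hs rsK N Q g f hg g_onto hf.
have [h [hh ghE]] := projU N Q g _ hg g_onto (rhom_comp hr hf).
by exists (fun y => h (s y)); split; [exact: rhom_comp | move=> y; rewrite ghE rsK].
Qed.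

End RightModuleMaps.

Section RightKernel.
Variables (R : nzRingType) (n : nat) (M : rmodType R).
Variables (p : 'rV[GRing.converse R]_n -> M) (hp : rhom p).

(* Indexed by the proof [hp] so that the instances below do not have to
   discharge it. *)
Record rker_of (h : rhom p) :=
  RKer { rker_val : 'rV[GRing.converse R]_n; rker_valP : p rker_val = 0 }.
Notation rker := (rker_of hp).
HB.instance Definition _ := gen_eqMixin rker.
HB.instance Definition _ := gen_choiceMixin rker.

Lemma rker_val_inj : injective (@rker_val hp).
Proof. by case=> [x px] [y py] /= exy; subst y; rewrite (Prop_irrelevance px py). Qed.

Lemma rker0 : p 0 = 0. Proof. exact: rhom0. Qed.
Lemma rkerD x y : p x = 0 -> p y = 0 -> p (x + y) = 0.
Proof. by move=> px py; rewrite hp.1 px py addr0. Qed.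
Lemma rkerN x : p x = 0 -> p (- x) = 0.
Proof. by move=> px; rewrite rhomN // px oppr0. Qed.
Lemma rkerZ c x : p x = 0 -> p (c *: x) = 0.
Proof. by move=> px; rewrite hp.2 px scaler0. Qed.

Definition rker_zero : rker := RKer hp rker0.
Definition rker_add (x y : rker) : rker := RKer hp (rkerD (rker_valP x) (rker_valP y)).
Definition rker_opp (x : rker) : rker := RKer hp (rkerN (rker_valP x)).
Definition rker_scale c (x : rker) : rker := RKer hp (rkerZ c (rker_valP x)).

Lemma rker_addA : associative rker_add.
Proof. by move=> x y z; apply: rker_val_inj; rewrite /= addrA. Qed.
Lemma rker_addC : commutative rker_add.
Proof. by move=> x y; apply: rker_val_inj; rewrite /= addrC. Qed.
Lemma rker_add0 : left_id rker_zero rker_add.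
Proof. by move=> x; apply: rker_val_inj; rewrite /= add0r. Qed.
Lemma rker_addN : left_inverse rker_zero rker_opp rker_add.
Proof. by move=> x; apply: rker_val_inj; rewrite /= addNr. Qed.
HB.instance Definition _ :=
  GRing.isZmodule.Build rker rker_addA rker_addC rker_add0 rker_addN.

Lemma rker_scaleA a b x : rker_scale a (rker_scale b x) = rker_scale (a * b) x.
Proof. by apply: rker_val_inj; rewrite /= scalerA. Qed.
Lemma rker_scale1 : left_id 1 rker_scale.
Proof. by move=> x; apply: rker_val_inj; rewrite /= scale1r. Qed.
Lemma rker_scaleDr : right_distributive rker_scale +%R.
Proof. by move=> a x y; apply: rker_val_inj; rewrite /= scalerDr. Qed.
Lemma rker_scaleDl x : {morph rker_scale^~ x : a b / a + b}.
Proof. by move=> a b; apply: rker_val_inj; rewrite /= scalerDl. Qed.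
HB.instance Definition _ := GRing.Zmodule_isLmodule.Build (GRing.converse R) rker
  rker_scaleA rker_scale1 rker_scaleDr rker_scaleDl.

Lemma rker_val_rhom : rhom (@rker_val hp : rker -> _).
Proof. by []. Qed.

End RightKernel.

Lemma sum_ord_deltal (R : nzRingType) r (F : 'I_r -> R) (u : 'I_r) :
  \sum_(s < r) (u == s :> nat)%:R * F s = F u.
Proof.
rewrite (bigD1 u) //= eqxx mul1r big1 ?addr0 // => s /negbTE us.
by rewrite eq_sym -[(s == u :> nat)]/(s == u) us mul0r.
Qed.

Lemma sum_ord_deltar (R : nzRingType) r (F : 'I_r -> R) (u : 'I_r) :
  \sum_(s < r) F s * (u == s :> nat)%:R = F u.
Proof.
rewrite -[RHS](sum_ord_deltal F u).
by apply: eq_bigr => s _; case: (_ == _); rewrite ?mulr1 ?mul1r ?mulr0 ?mul0r.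
Qed.

(* [Y i * X j = (i == j)] makes [c |-> \sum_i X i * c_i] a split embedding of
   [R^m] into [R_R]. *)
Definition powers_retract (R : nzRingType) : Prop :=
  forall m, exists X Y : nat -> R,
    forall i j, (i < m)%N -> (j < m)%N -> Y i * X j = (i == j)%:R.

Definition rann_split (R : nzRingType) : Prop :=
  forall a : R, exists e : R, a * e = 0 /\ forall x : R, a * x = 0 -> e * x = x.

Section Presentation.
Variables (R : nzRingType) (M : rmodType R).
Notation Rc := (GRing.converse R).
Variables (n : nat) (p : 'rV[Rc]_n -> M) (hp : rhom p).
Variables (m : nat) (v : 'I_m -> 'rV[Rc]_n).
Hypotheses (pv0 : forall i, p (v i) = 0)
  (ker_p : forall x, p x = 0 -> exists c : 'I_m -> Rc, x = \sum_(i < m) c i *: v i).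
Variables (Xm Ym Xn Yn : nat -> R).
Hypotheses (YXm : forall i j, (i < m)%N -> (j < m)%N -> Ym i * Xm j = (i == j)%:R)
  (YXn : forall i j, (i < n)%N -> (j < n)%N -> Yn i * Xn j = (i == j)%:R).
Variable e : R.
Let rho : R := \sum_(l < n) \sum_(i < m) Xn l * v i 0 l * Ym i.
Hypotheses (rho_e : rho * e = 0) (rann_rho : forall x, rho * x = 0 -> e * x = x).

Lemma mulr_converse (x y : Rc) : x * y = (y : R) * (x : R). Proof. by []. Qed.

Lemma scale_rV_entry r (c : Rc) (z : 'rV[Rc]_r) l : (c *: z) 0 l = (z 0 l : R) * (c : R).
Proof. by rewrite mxE mulr_converse. Qed.

Definition packm (c : 'rV[Rc]_m) : R := \sum_(i < m) Xm i * c 0 i.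
Definition packn (z : 'rV[Rc]_n) : R := \sum_(l < n) Xn l * z 0 l.

Lemma packm_coord (c : 'rV[Rc]_m) (i : 'I_m) : (c 0 i : R) = Ym i * packm c.
Proof.
rewrite /packm mulr_sumr -[LHS](sum_ord_deltal (fun j => c 0 j : R) i).
by apply: eq_bigr => j _; rewrite mulrA YXm.
Qed.

Lemma packn_coord (z : 'rV[Rc]_n) (l : 'I_n) : (z 0 l : R) = Yn l * packn z.
Proof.
rewrite /packn mulr_sumr -[LHS](sum_ord_deltal (fun j => z 0 j : R) l).
by apply: eq_bigr => j _; rewrite mulrA YXn.
Qed.

Lemma packn_eq0 z : packn z = 0 -> z = 0.
Proof. by move=> z0; apply/rowP => l; rewrite packn_coord z0 mulr0 mxE. Qed.

Lemma packnB z1 z2 : packn (z1 - z2) = packn z1 - packn z2.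
Proof.
rewrite /packn -sumrB; apply: eq_bigr => l _.
by rewrite !mxE mulrDr mulrN.
Qed.

Lemma packmD c1 c2 : packm (c1 + c2) = packm c1 + packm c2.
Proof. by rewrite /packm -big_split; apply: eq_bigr => i _; rewrite mxE mulrDr. Qed.

Lemma packmZ (a : Rc) c : packm (a *: c) = packm c * a.
Proof. by rewrite /packm mulr_suml; apply: eq_bigr => i _; rewrite scale_rV_entry mulrA. Qed.

Definition relmap (c : 'rV[Rc]_m) : 'rV[Rc]_n := \sum_(i < m) c 0 i *: v i.

Lemma relmap_rhom : rhom relmap.
Proof.
split=> [x y|a x]; rewrite /relmap.
  by rewrite -big_split; apply: eq_bigr => i _; rewrite mxE scalerDl.
by rewrite scaler_sumr; apply: eq_bigr => i _; rewrite mxE scalerA.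
Qed.

Lemma packn_relmap c : packn (relmap c) = rho * packm c.
Proof.
rewrite /packn /rho mulr_suml; apply: eq_bigr => l _.
rewrite /relmap summxE mulr_sumr mulr_suml; apply: eq_bigr => i _.
by rewrite scale_rV_entry -!mulrA -packm_coord.
Qed.

Lemma rho_packm_id : rho * \sum_(j < m) Xm j * Ym j = rho.
Proof.
have rhoXm (j : 'I_m) : rho * Xm j = \sum_(l < n) Xn l * v j 0 l.
  rewrite /rho mulr_suml; apply: eq_bigr => l _; rewrite mulr_suml.
  rewrite -[RHS](sum_ord_deltar (fun i => Xn l * v i 0 l) j).
  by apply: eq_bigr => i _; rewrite -mulrA YXm // eq_sym.
rewrite mulr_sumr (eq_bigr (fun j : 'I_m => \sum_(l < n) Xn l * v j 0 l * Ym j)).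
  by rewrite /rho exchange_big.
by move=> j _; rewrite mulrA rhoXm mulr_suml.
Qed.

(* Kills [ker relmap] and agrees with the identity modulo it: a retraction of
   [R^m] onto a complement of [ker relmap]. *)
Definition splitm (c : 'rV[Rc]_m) : 'rV[Rc]_m := \row_i (Ym i * ((1 - e) * packm c) : Rc).

Lemma splitm_rhom : rhom splitm.
Proof.
split=> [x y|a x]; apply/rowP => i; rewrite !mxE.
  by rewrite packmD !mulrDr.
by rewrite packmZ mulr_converse !mulrA.
Qed.

Lemma relmap_splitm c : relmap (splitm c) = relmap c.
Proof.
have packm_splitm :
    packm (splitm c) = (\sum_(j < m) Xm j * Ym j) * ((1 - e) * packm c).
  by rewrite /packm mulr_suml; apply: eq_bigr => j _; rewrite mxE mulrA.
apply/eqP; rewrite -subr_eq0; apply/eqP/packn_eq0.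
rewrite packnB !packn_relmap packm_splitm mulrA rho_packm_id mulrA mulrBr mulr1 rho_e.
by rewrite subr0 subrr.
Qed.

Lemma splitm_ker c : relmap c = 0 -> splitm c = 0.
Proof.
move=> c0; have rho_c : rho * packm c = 0.
  by rewrite -packn_relmap c0 /packn big1 // => l _; rewrite mxE mulr0.
by apply/rowP => i; rewrite !mxE mulrBl mul1r rann_rho // subrr mulr0.
Qed.

Lemma p_relmap c : p (relmap c) = 0.
Proof. by rewrite rhom_sum // big1 // => i _; rewrite hp.2 pv0 scaler0. Qed.

Definition relmap_ker c : rker_of hp := RKer hp (p_relmap c).

Lemma relmap_ker_rhom : rhom relmap_ker.
Proof.
by split=> [x y|a x]; apply: rker_val_inj; rewrite /= ?relmap_rhom.1 ?relmap_rhom.2.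
Qed.

Let relpre_ex (y : rker_of hp) := ker_p (rker_valP y).
Definition relpre (y : rker_of hp) : 'rV[Rc]_m :=
  \row_i projT1 (boolp.choice relpre_ex) y i.

Lemma relmap_relpre y : relmap (relpre y) = rker_val y.
Proof.
rewrite (projT2 (boolp.choice relpre_ex) y) /relmap.
by apply: eq_bigr => i _; rewrite mxE.
Qed.

Definition relsec y := splitm (relpre y).

(* Two preimages differ by an element of [ker relmap], which [splitm] kills. *)
Lemma relsec_rhom : rhom relsec.
Proof.
have splitmB := fun a b => rhomB a b splitm_rhom.
have relmapB := fun a b => rhomB a b relmap_rhom.
split=> [x y|a x]; rewrite /relsec.
  have /eqP : splitm (relpre (x + y) - relpre x - relpre y) = 0.
    apply: splitm_ker; rewrite !relmapB !relmap_relpre /=.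
    by rewrite (addrC (rker_val x)) addrK subrr.
  by rewrite !splitmB subr_eq0 subr_eq => /eqP ->; rewrite addrC.
have /eqP : splitm (relpre (a *: x) - a *: relpre x) = 0.
  by apply: splitm_ker; rewrite relmapB relmap_rhom.2 !relmap_relpre /= subrr.
by rewrite splitmB subr_eq0 splitm_rhom.2 => /eqP.
Qed.

Lemma relmap_ker_relsec y : relmap_ker (relsec y) = y.
Proof. by apply: rker_val_inj; rewrite /= /relsec relmap_splitm relmap_relpre. Qed.

Lemma rker_rprojective : rprojective (rker_of hp).
Proof.
exact: rprojective_retract (@rprojective_rV R m) relmap_ker_rhom relsec_rhom
  relmap_ker_relsec.
Qed.

End Presentation.

Theorem rfinitely_presented_rpd_le1 (R : nzRingType) :
  rann_split R -> powers_retract R -> forall M : rmodType R,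
  rfinitely_presented M -> rpd_le1 M.
Proof.
move=> rannR retrR M [n [p [hp [p_onto [m [v [pv0 ker_p]]]]]]].
have [Xm [Ym YXm]] := retrR m; have [Xn [Yn YXn]] := retrR n.
have [e [rho_e rann_rho]] :=
  rannR (\sum_(l < n) \sum_(i < m) Xn l * v i 0 l * Ym i).
exists ('rV[GRing.converse R]_n : rmodType R), (rker_of hp), (@rker_val _ _ _ _ hp), p.
split; first exact: rprojective_rV.
split; first exact: (rker_rprojective pv0 ker_p YXm YXn rho_e rann_rho).
split; first exact: rker_val_rhom.
split; first exact: hp.
split; first exact: rker_val_inj.
split; first exact: p_onto.
by move=> x; split=> [px|[y ->]]; [exists (RKer hp px) | exact: rker_valP].
Qed.

Section Stride.
Variables (k : fieldType) (S i : nat).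
Hypothesis S_gt0 : (0 < S)%N.

Definition stride_mx (a b : nat) : k := (a == (b * S + i)%N)%:R.
Definition unstride_mx (a b : nat) : k := (b == (a * S + i)%N)%:R.

Lemma leq_stride b : (b <= b * S + i)%N.
Proof. by rewrite (leq_trans (leq_pmulr b S_gt0)) // leq_addr. Qed.

Lemma stride_rcf : row_col_finite stride_mx.
Proof.
split=> x.
  exists x.+1 => b xb; rewrite /stride_mx; case: eqP => // xbS.
  by have := leq_trans xb (leq_stride b); rewrite -xbS ltnn.
exists (x * S + i)%N.+1 => a xa; rewrite /stride_mx.
by case: eqP => // axS; rewrite axS ltnn in xa.
Qed.

Lemma unstride_rcf : row_col_finite unstride_mx.
Proof.
split=> x.
  exists (x * S + i)%N.+1 => b xb; rewrite /unstride_mx.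
  by case: eqP => // bxS; rewrite bxS ltnn in xb.
exists x.+1 => a xa; rewrite /unstride_mx; case: eqP => // xaS.
by have := leq_trans xa (leq_stride a); rewrite -xaS ltnn.
Qed.

Definition stride : RCFM k := RCFMat stride_rcf.
Definition unstride : RCFM k := RCFMat unstride_rcf.

End Stride.

Lemma eqn_stride S a b i j : (i < S)%N -> (j < S)%N ->
  (a * S + i == b * S + j)%N = (a == b) && (i == j).
Proof.
move=> iS jS; apply/eqP/andP => [e|[/eqP-> /eqP->]] //.
have ij : i = j by have := congr1 (modn^~ S) e; rewrite !modnMDl !modn_small.
subst j; split => //; move/addIn: e => /eqP; rewrite eqn_pmul2r //.
exact: leq_ltn_trans iS.
Qed.

(* [X i] sends coordinate [b] to [b * m.+1 + i]: the residue classes mod [m.+1]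
   give [m.+1 >= m] orthogonal copies of [N_0]. *)
Lemma rcfm_powers_retract (k : fieldType) : powers_retract (RCFM k).
Proof.
move=> m; have S_gt0 : (0 < m.+1)%N by [].
exists (fun i => stride k i S_gt0), (fun i => unstride k i S_gt0) => i j im jm.
apply: rcfm_ext => a b; rewrite /GRing.mul /=.
rewrite (@mulfE _ _ _ a b (a * m.+1 + i)%N.+1); last first.
  by move=> l al; rewrite /= /unstride_mx; case: eqP => // lai; rewrite lai ltnn in al.
rewrite big_ord_recr /= big1 ?add0r; last first.
  by move=> l _; rewrite /unstride_mx (ltn_eqF (ltn_ord l)) mul0r.
rewrite /unstride_mx /stride_mx eqxx mul1r eqn_stride ?(leq_trans im) ?(leq_trans jm) //.
by case: (i == j); rewrite ?andbF // andbT.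
Qed.

Section FinitelySupportedVectors.
Variable k : fieldType.
Notation vec := (nat -> k^o).
Implicit Types x y w : vec.

Definition finsupp x : Prop := exists N, fsupp (x : nat -> k) N.

(* A junk value unless one of the two vectors is finitely supported. *)
Definition vdot x w : k := fsum (fun j => x j * w j).

Definition unitv (i : nat) : vec := fun j => (j == i)%:R.

Definition lincomb (mu : nat -> k) (c : nat -> vec) r : vec := \sum_(s < r) mu s *: c s.

Lemma vdotE x w N : fsupp (w : nat -> k) N -> vdot x w = \sum_(j < N) x j * w j.
Proof. by move=> wN; apply: fsumE => j /wN ->; rewrite mulr0. Qed.

Lemma vdotC x w : vdot x w = vdot w x.
Proof. by rewrite /vdot; congr fsum; apply: funext => j; rewrite mulrC. Qed.

Lemma finsupp0 : finsupp 0. Proof. by exists 0%N. Qed.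

Lemma finsuppD x y : finsupp x -> finsupp y -> finsupp (x + y).
Proof.
move=> [N xN] [M yM]; exists (maxn N M) => j; rewrite geq_max => /andP[/xN xj /yM yj].
by rewrite addrfctE /= xj yj addr0.
Qed.

Lemma finsuppZ a x : finsupp x -> finsupp (a *: x).
Proof. by move=> [N xN]; exists N => j /xN xj; rewrite scalrfctE /= xj scaler0. Qed.

Lemma finsupp_lincomb mu c r : (forall s, finsupp (c s)) -> finsupp (lincomb mu c r).
Proof.
move=> fc; rewrite /lincomb; elim: r => [|r IH]; first by rewrite big_ord0; apply: finsupp0.
by rewrite big_ord_recr; apply: finsuppD => //; apply: finsuppZ.
Qed.

Lemma fsupp_unitv i : fsupp (unitv i : nat -> k) i.+1.
Proof. by move=> j ij; rewrite /unitv; case: eqP => // ji; rewrite ji ltnn in ij. Qed.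

Lemma finsupp_unitv i : finsupp (unitv i).
Proof. by exists i.+1; apply: fsupp_unitv. Qed.

Lemma vdotDl x y w : finsupp w -> vdot (x + y) w = vdot x w + vdot y w.
Proof.
by move=> [N wN]; rewrite !(vdotE _ wN) -big_split; apply: eq_bigr => j _; rewrite addrfctE mulrDl.
Qed.

Lemma vdotZl a x w : finsupp w -> vdot (a *: x) w = a * vdot x w.
Proof.
by move=> [N wN]; rewrite !(vdotE _ wN) mulr_sumr; apply: eq_bigr => j _; rewrite scalrfctE mulrA.
Qed.

Lemma vdot0l w : finsupp w -> vdot 0 w = 0.
Proof. by move=> fw; rewrite -(scale0r (0 : vec)) vdotZl // mul0r. Qed.

Lemma vdotBl x y w : finsupp w -> vdot (x - y) w = vdot x w - vdot y w.
Proof. by move=> fw; rewrite vdotDl // -scaleN1r vdotZl // mulN1r. Qed.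

Lemma vdot_lincombl mu c r w : finsupp w ->
  vdot (lincomb mu c r) w = \sum_(s < r) mu s * vdot (c s) w.
Proof.
move=> fw; rewrite /lincomb; elim: r => [|r IH]; first by rewrite !big_ord0 vdot0l.
by rewrite !big_ord_recr vdotDl // IH vdotZl.
Qed.

Lemma vdotDr x y w : finsupp w -> vdot w (x + y) = vdot w x + vdot w y.
Proof. by move=> fw; rewrite vdotC vdotDl // vdotC [vdot y w]vdotC. Qed.

Lemma vdotZr a x w : finsupp w -> vdot w (a *: x) = a * vdot w x.
Proof. by move=> fw; rewrite vdotC vdotZl // vdotC. Qed.

Lemma vdotBr x y w : finsupp w -> vdot w (x - y) = vdot w x - vdot w y.
Proof. by move=> fw; rewrite vdotC vdotBl // vdotC [vdot y w]vdotC. Qed.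

Lemma vdot_unitv x i : vdot x (unitv i) = x i.
Proof.
rewrite (vdotE _ (@fsupp_unitv i)) big_ord_recr /= /unitv eqxx mulr1.
by rewrite big1 ?add0r // => j _; rewrite (ltn_eqF (ltn_ord j)) mulr0.
Qed.

Lemma lincomb_widen mu c c' r r' : (r <= r')%N -> (forall s, (s < r)%N -> c' s = c s) ->
  lincomb mu c r = lincomb (fun s => if (s < r)%N then mu s else 0) c' r'.
Proof.
move=> rr' cc'; rewrite /lincomb -(subnKC rr') big_split_ord /=.
rewrite [X in _ = _ + X]big1 ?addr0; last by move=> s _; rewrite ltnNge leq_addr scale0r.
by apply: eq_bigr => s _; rewrite ltn_ord cc'.
Qed.

End FinitelySupportedVectors.
Arguments unitv {k}. Arguments vdot {k}. Arguments finsupp {k}. Arguments lincomb {k}.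

Definition indep_on (k : fieldType) (V : Type) (S : V -> Prop) (f : nat -> V -> k) r :=
  forall lam : nat -> k, (forall x, S x -> \sum_(s < r) lam s * f s x = 0) ->
  forall s, (s < r)%N -> lam s = 0.

Section IndependentFunctionals.
Variables (k : fieldType) (X : lmodType k) (S : X -> Prop) (f : nat -> X -> k).
Hypotheses (S0 : S 0) (SD : forall x y, S x -> S y -> S (x + y))
  (SZ : forall a x, S x -> S (a *: x)).
Hypotheses (fD : forall s x y, f s (x + y) = f s x + f s y)
  (fZ : forall s a x, f s (a *: x) = a * f s x).

Lemma functionalB s x y : f s (x - y) = f s x - f s y.
Proof. by rewrite fD -scaleN1r fZ mulN1r. Qed.

Lemma functional_sum s r (c : nat -> X) : f s (\sum_(i < r) c i) = \sum_(i < r) f s (c i).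
Proof.
elim: r => [|r IH]; first by rewrite !big_ord0 -(scale0r (0 : X)) fZ mul0r.
by rewrite !big_ord_recr fD IH.
Qed.

Lemma subspaceB x y : S x -> S y -> S (x - y).
Proof. by move=> Sx Sy; apply: SD => //; rewrite -scaleN1r; apply: SZ. Qed.

Lemma subspace_sum r (c : nat -> X) : (forall i, S (c i)) -> S (\sum_(i < r) c i).
Proof.
by move=> Sc; elim: r => [|r IH]; rewrite ?big_ord0 // big_ord_recr; apply: SD.
Qed.

Lemma indep_on_prefix r : indep_on S f r.+1 -> indep_on S f r.
Proof.
move=> ind lam lam0 s sr; pose lam' u := if (u < r)%N then lam u else 0.
suff /(_ s (leqW sr)) : forall u, (u < r.+1)%N -> lam' u = 0 by rewrite /lam' sr.
apply: ind => x Sx; rewrite big_ord_recr /= /lam' ltnn mul0r addr0 -[RHS](lam0 x Sx).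
by apply: eq_bigr => i _; rewrite ltn_ord.
Qed.

(* [zs] is a dual family for [f 0, ..., f r.-1] inside [S]; subtracting the
   projection [\sum_s f s x *: zs s] reduces to the common kernel. *)
Lemma functional_in_span r (zs : nat -> X) :
    (forall s, S (zs s)) -> (forall s u, (u < r)%N -> f u (zs s) = (u == s)%:R) ->
    (forall z, S z -> (forall s, (s < r)%N -> f s z = 0) -> f r z = 0) ->
  forall x, S x -> f r x = \sum_(s < r) f s x * f r (zs s).
Proof.
move=> Szs fzs ker_fr x Sx; pose y := x - \sum_(s < r) f s x *: zs s.
have Sy : S y by apply: subspaceB => //; apply: (@subspace_sum r (fun s => f s x *: zs s)) => s; apply: SZ.
have fy u : f u y = f u x - \sum_(s < r) f s x * f u (zs s).
  by rewrite functionalB (@functional_sum u r (fun s => f s x *: zs s)); congr (_ - _); apply: eq_bigr => s _; rewrite fZ.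
apply/eqP; rewrite -subr_eq0 -fy; apply/eqP/ker_fr => // u ur.
rewrite fy (eq_bigr (fun s : 'I_r => f s x * (Ordinal ur == s :> nat)%:R)).
  by rewrite sum_ord_deltar subrr.
by move=> s _; rewrite fzs.
Qed.

Lemma indep_on_onto r : indep_on S f r ->
  forall t : nat -> k, exists x, S x /\ forall s, (s < r)%N -> f s x = t s.
Proof.
elim: r => [_ t|r IH ind]; first by exists 0.
have ontor := IH (indep_on_prefix ind).
have [z [Sz z0 z1]] : exists z, [/\ S z, forall s, (s < r)%N -> f s z = 0 & f r z != 0].
  apply: contrapT => no_z.
  have [zs zsP] := boolp.choice (fun s => ontor (fun u => (u == s)%:R)).
  have fr_span := functional_in_span (fun s => (zsP s).1) (fun s => (zsP s).2).
  pose lam u := if (u < r)%N then - f r (zs u) else 1.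
  suff /(_ r (ltnSn r)) : forall u, (u < r.+1)%N -> lam u = 0.
    by rewrite /lam ltnn => /eqP; rewrite oner_eq0.
  apply: ind => x Sx; rewrite /lam.
  rewrite big_ord_recr /= ltnn mul1r fr_span //; last first.
    by move=> y Sy fy0; apply: contrapT => /eqP fy; apply: no_z; exists y.
  rewrite (eq_bigr (fun s : 'I_r => - (f s x * f r (zs s)))) ?sumrN ?addNr //.
  by move=> s _; rewrite ltn_ord mulNr mulrC.
move=> t; have [x0 [Sx0 fx0]] := ontor t.
exists (x0 + ((t r - f r x0) / f r z) *: z); split; first by apply: SD => //; apply: SZ.
move=> s; rewrite ltnS leq_eqVlt => /orP[/eqP->|sr].
  by rewrite fD fZ divfK // addrC subrK.
by rewrite fD fZ (z0 s sr) mulr0 addr0 fx0.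
Qed.

End IndependentFunctionals.

Definition extendv (k : fieldType) (c : nat -> nat -> k^o) r (x : nat -> k^o) :=
  fun s => if s == r then x else c s.

Lemma extendv_lt k c r x s : (s < r)%N -> @extendv k c r x s = c s.
Proof. by move=> sr; rewrite /extendv (ltn_eqF sr). Qed.

Lemma lincomb_extendv k mu c r x :
  lincomb mu (@extendv k c r x) r.+1 = lincomb mu c r + mu r *: x.
Proof.
rewrite /lincomb big_ord_recr /= /extendv eqxx; congr (_ + _).
by apply: eq_bigr => s _; rewrite (ltn_eqF (ltn_ord s)).
Qed.

Section ComplementExtension.
Variable k : fieldType.
Notation vec := (nat -> k^o).
Variables (P Q : vec -> Prop) (b : vec -> vec -> k).
Hypotheses (P0 : P 0) (PD : forall x y, P x -> P y -> P (x + y))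
  (PZ : forall a x, P x -> P (a *: x)) (P_finsupp : forall x, P x -> finsupp x)
  (Q_finsupp : forall w, Q w -> finsupp w)
  (P_perp : forall z, finsupp z -> (forall w, Q w -> b z w = 0) -> P z)
  (bDl : forall x y w, finsupp w -> b (x + y) w = b x w + b y w)
  (bZl : forall a x w, finsupp w -> b (a *: x) w = a * b x w).

Definition orth (c : nat -> vec) rc (d : nat -> vec) rd :=
  forall s u, (s < rc)%N -> (u < rd)%N -> b (c s) (d u) = 0.

Lemma b_lincombl mu c r w : finsupp w ->
  b (lincomb mu c r) w = \sum_(s < r) mu s * b (c s) w.
Proof.
move=> fw; rewrite /lincomb; elim: r => [|r IH].
  by rewrite !big_ord0 -(scale0r (0 : vec)) bZl // mul0r.
by rewrite !big_ord_recr bDl // IH bZl.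
Qed.

Let PN x : P x -> P (- x).
Proof. by move=> Px; rewrite -scaleN1r; apply: PZ. Qed.

(* A dependence [\sum_s mu s *: extendv c r x s \in P] forces [mu r = 0]: otherwise
   dividing by [mu r] puts [x] in [P + span c]. *)
Lemma indep_on_extendv c r x : finsupp x -> (forall s, finsupp (c s)) ->
    indep_on Q (fun s => b (c s)) r -> ~ (exists mu, P (x - lincomb mu c r)) ->
  indep_on Q (fun s => b (extendv c r x s)) r.+1.
Proof.
move=> fx fc ind x_out mu mu0.
have fc' s : finsupp (extendv c r x s) by rewrite /extendv; case: eqP.
have P_comb : P (lincomb mu (extendv c r x) r.+1).
  apply: P_perp => [|w Qw]; first exact: finsupp_lincomb.
  by rewrite b_lincombl; [exact: mu0 | exact: Q_finsupp].
have mur : mu r = 0.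
  apply: contrapT => /eqP mur; apply: x_out; exists (fun s => - mu s / mu r).
  have -> : x - lincomb (fun s => - mu s / mu r) c r =
            (mu r)^-1 *: lincomb mu (extendv c r x) r.+1.
    rewrite lincomb_extendv scalerDr scalerA mulVf // scale1r addrC /lincomb.
    rewrite scaler_sumr -sumrN; congr (_ + _); apply: eq_bigr => s _.
    by rewrite !scalerA -scaleNr mulNr opprK mulrC.
  exact: PZ.
move=> s; rewrite ltnS leq_eqVlt => /orP[/eqP-> //|sr].
apply: ind => // w Qw; rewrite -[RHS](mu0 w Qw) big_ord_recr /= mur mul0r addr0.
by apply: eq_bigr => i _; rewrite extendv_lt.
Qed.

(* The new vector is [e + x] with [x \in P] chosen, by independence of the
   [d u] on [P], so that [e + x] is orthogonal to every [d u]. *)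
Lemma extend_complement c rc d rd e : finsupp e ->
    (forall s, finsupp (c s)) -> (forall u, finsupp (d u)) ->
    indep_on Q (fun s => b (c s)) rc -> indep_on P (fun u x => b x (d u)) rd ->
    orth c rc d rd ->
  exists c' rc', [/\ (rc <= rc')%N /\ (forall s, (s < rc)%N -> c' s = c s),
    (forall s, finsupp (c' s)), indep_on Q (fun s => b (c' s)) rc',
    orth c' rc' d rd & exists mu, P (e - lincomb mu c' rc')].
Proof.
move=> fe fc fd indc indd cd.
case: (pselect (exists mu, P (e - lincomb mu c rc))) => [e_in|e_out].
  by exists c, rc.
have [x [Px bx]] := indep_on_onto P0 PD PZ (fun u x y => bDl x y (fd u))
  (fun u a x => bZl a x (fd u)) indd (fun u => - b e (d u)).
have fex : finsupp (e + x) by apply: finsuppD => //; exact: P_finsupp.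
exists (extendv c rc (e + x)), rc.+1; split.
- by split=> // s; apply: extendv_lt.
- by move=> s; rewrite /extendv; case: eqP.
- apply: indep_on_extendv => // -[mu Pmu]; apply: e_out; exists mu.
  by rewrite -[e](addrK x) addrAC; apply: PD => //; apply: PN.
- move=> s u; rewrite ltnS leq_eqVlt => /orP[/eqP->|sr] ur.
    by rewrite /extendv eqxx bDl // bx // subrr.
  by rewrite extendv_lt // cd.
- exists (fun s => (s == rc)%:R); rewrite lincomb_extendv eqxx scale1r.
  rewrite [lincomb _ _ _]big1 ?add0r; last first.
    by move=> s _; rewrite (ltn_eqF (ltn_ord s)) scale0r.
  by rewrite opprD addrA subrr add0r; apply: PN.
Qed.

End ComplementExtension.

Section BackAndForth.
Variable k : fieldType.
Notation vec := (nat -> k^o).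
Variable a : RCFM k.

Definition annv (x : vec) := finsupp x /\ forall i, vdot (a i) x = 0.
Definition annv_perp (w : vec) := finsupp w /\ forall x, annv x -> vdot x w = 0.

Lemma finsupp_row i : finsupp (a i : vec). Proof. exact: rowf. Qed.

Lemma annv0 : annv 0.
Proof. by split=> [|i]; [exact: finsupp0 | rewrite vdotC (vdot0l (finsupp_row i))]. Qed.

Lemma annvD x y : annv x -> annv y -> annv (x + y).
Proof.
move=> [fx ax] [fy ay]; split=> [|i]; first exact: finsuppD.
by rewrite vdotC (vdotDl _ _ (finsupp_row i)) vdotC ax vdotC ay addr0.
Qed.

Lemma annvZ c x : annv x -> annv (c *: x).
Proof.
move=> [fx ax]; split=> [|i]; first exact: finsuppZ.
by rewrite vdotC (vdotZl _ _ (finsupp_row i)) vdotC ax mulr0.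
Qed.

Lemma annv_perp0 : annv_perp 0.
Proof. by split=> [|x [fx _]]; [exact: finsupp0 | rewrite vdotC vdot0l]. Qed.

Lemma annv_perpD x y : annv_perp x -> annv_perp y -> annv_perp (x + y).
Proof.
move=> [fx px] [fy py]; split=> [|z [fz az]]; first exact: finsuppD.
by rewrite vdotDr // px ?py // addr0.
Qed.

Lemma annv_perpZ c x : annv_perp x -> annv_perp (c *: x).
Proof.
move=> [fx px]; split=> [|z [fz az]]; first exact: finsuppZ.
by rewrite vdotZr // px ?mulr0.
Qed.

(* [annv] is closed in the pairing because [annv_perp] contains the rows of [a]. *)
Lemma annv_perp_perp z : finsupp z -> (forall w, annv_perp w -> vdot z w = 0) -> annv z.
Proof.
move=> fz perp_z; split=> // i; rewrite vdotC; apply: perp_z.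
by split=> [|x [_ ax]]; [exact: finsupp_row | rewrite vdotC ax].
Qed.

Record bfstate := BFState { cnum : nat; cvec : nat -> vec; dnum : nat; dvec : nat -> vec }.

Definition bf_inv s :=
  [/\ forall u, finsupp (cvec s u), forall u, finsupp (dvec s u),
      indep_on annv_perp (fun u => vdot (cvec s u)) (cnum s),
      indep_on annv (fun u x => vdot x (dvec s u)) (dnum s) &
      orth vdot (cvec s) (cnum s) (dvec s) (dnum s)].

Definition bf_le s s' :=
  [/\ (cnum s <= cnum s')%N, forall u, (u < cnum s)%N -> cvec s' u = cvec s u,
      (dnum s <= dnum s')%N & forall u, (u < dnum s)%N -> dvec s' u = dvec s u].

Definition bf_covers t s :=
  (exists mu, annv (unitv t - lincomb mu (cvec s) (cnum s))) /\
  (exists lam, annv_perp (unitv t - lincomb lam (dvec s) (dnum s))).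

Lemma bf_le_trans s1 s2 s3 : bf_le s1 s2 -> bf_le s2 s3 -> bf_le s1 s3.
Proof.
move=> [c12 ec12 d12 ed12] [c23 ec23 d23 ed23]; split.
- exact: leq_trans c12 c23.
- by move=> u ur; rewrite ec23 ?ec12 //; apply: leq_trans ur c12.
- exact: leq_trans d12 d23.
- by move=> u ur; rewrite ed23 ?ed12 //; apply: leq_trans ur d12.
Qed.

(* One round: first extend [cvec] against [dvec], then [dvec] against the new
   [cvec], with the roles of [annv] and [annv_perp] exchanged. *)
Lemma bf_step s t : bf_inv s -> exists s', [/\ bf_inv s', bf_le s s' & bf_covers t s'].
Proof.
move=> [fc fd indc indd cd].
have [c' [rc' [[cc' ec'] fc' indc' c'd [mu Kmu]]]] :=
  extend_complement (Q := annv_perp) (b := vdot) annv0 annvD annvZ (fun x h => h.1) (fun x h => h.1) annv_perp_perp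
    (fun x y w h => vdotDl x y h) (fun c x w h => vdotZl c x h)
    (@finsupp_unitv k t) fc fd indc indd cd.
have [d' [rd' [[dd' ed'] fd' indd' d'c [lam Llam]]]] :=
  extend_complement (Q := annv) (b := fun w x => vdot x w) annv_perp0 annv_perpD annv_perpZ (fun x h => h.1) (fun x h => h.1)
    (fun z fz h => conj fz h) (fun x y w h => vdotDr x y h) (fun c x w h => vdotZr c x h)
    (@finsupp_unitv k t) fd fc' indd indc' (fun u s ur sc => c'd s u sc ur).
exists (BFState rc' c' rd' d'); split => //=.
- by split=> // j u jc ur; apply: d'c.
- by split; [exists mu | exists lam].
Qed.

Definition bf_init := BFState 0 (fun _ => 0) 0 (fun _ => 0).

Lemma bf_inv_init : bf_inv bf_init.
Proof. by split=> // *; apply: finsupp0. Qed.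

Fixpoint bf_seq t := if t is t'.+1 then
  epsilon (inhabits bf_init) (fun s' => [/\ bf_inv s', bf_le (bf_seq t') s' & bf_covers t' s'])
  else bf_init.

Lemma bf_seqS t : bf_inv (bf_seq t) ->
  [/\ bf_inv (bf_seq t.+1), bf_le (bf_seq t) (bf_seq t.+1) & bf_covers t (bf_seq t.+1)].
Proof.
move=> inv_t; apply: (epsilon_spec (inhabits bf_init)
  (fun s' => [/\ bf_inv s', bf_le (bf_seq t) s' & bf_covers t s'])).
exact: bf_step.
Qed.

Lemma bf_seq_inv t : bf_inv (bf_seq t).
Proof. by elim: t => [|t IH]; [exact: bf_inv_init | case: (bf_seqS IH)]. Qed.

Lemma bf_seq_le t t' : (t < t')%N -> bf_le (bf_seq t) (bf_seq t').
Proof.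
elim: t' => // t' IH; have [_ step _] := bf_seqS (bf_seq_inv t').
by rewrite ltnS leq_eqVlt => /orP[/eqP->|/IH tt'] //; apply: bf_le_trans tt' step.
Qed.

Lemma bf_seq_covers t : bf_covers t (bf_seq t.+1).
Proof. by case: (bf_seqS (bf_seq_inv t)). Qed.

End BackAndForth.

Section RightAnnihilator.
Variable k : fieldType.
Notation vec := (nat -> k^o).
Variable a : RCFM k.

Let gamma_ex j := (bf_seq_covers a j).1.
Let delta_ex i := (bf_seq_covers a i).2.

Definition gamma j : vec :=
  lincomb (projT1 (boolp.choice gamma_ex) j) (cvec (bf_seq a j.+1)) (cnum (bf_seq a j.+1)).
Definition delta i : vec :=
  lincomb (projT1 (boolp.choice delta_ex) i) (dvec (bf_seq a i.+1)) (dnum (bf_seq a i.+1)).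

Lemma annv_unitv_gamma j : annv a (unitv j - gamma j).
Proof. exact: (projT2 (boolp.choice gamma_ex) j). Qed.

Lemma annv_perp_unitv_delta i : annv_perp a (unitv i - delta i).
Proof. exact: (projT2 (boolp.choice delta_ex) i). Qed.

Lemma finsupp_delta i : finsupp (delta i).
Proof. by apply: finsupp_lincomb; case: (bf_seq_inv a i.+1). Qed.

(* Both lie in the later state [bf_seq (maxn j i).+2], where [cvec] and [dvec]
   are orthogonal. *)
Lemma vdot_gamma_delta j i : vdot (gamma j) (delta i) = 0.
Proof.
have [cj ecj _ _] : bf_le (bf_seq a j.+1) (bf_seq a (maxn j i).+2).
  by apply: bf_seq_le; rewrite !ltnS leq_maxl.
have [_ _ di edi] : bf_le (bf_seq a i.+1) (bf_seq a (maxn j i).+2).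
  by apply: bf_seq_le; rewrite !ltnS leq_maxr.
rewrite /gamma /delta (lincomb_widen _ cj ecj) (lincomb_widen _ di edi).
have [fc fd _ _ cd] := bf_seq_inv a (maxn j i).+2.
rewrite vdot_lincombl; last exact: finsupp_lincomb.
apply: big1 => s _; rewrite vdotC vdot_lincombl // big1 ?mulr0 // => u _.
by rewrite vdotC cd ?mulr0.
Qed.

Definition rann_mx i j : k := (unitv j - gamma j) i.

(* Pair [unitv j - gamma j \in annv a] with [unitv i - delta i \in annv_perp a]. *)
Lemma rann_mx_row i j : rann_mx i j = delta i j.
Proof.
have fKj := (annv_unitv_gamma j).1.
have := vdotBr (unitv i) (delta i) fKj.
rewrite (annv_perp_unitv_delta i).2; last exact: annv_unitv_gamma.
rewrite /rann_mx => /eqP; rewrite eq_sym subr_eq0 vdot_unitv => /eqP ->.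
by rewrite (vdotBl _ _ (finsupp_delta i)) vdot_gamma_delta subr0 vdotC vdot_unitv.
Qed.

Lemma rann_mx_rcf : row_col_finite rann_mx.
Proof.
split=> x; last by have [N xN] := (annv_unitv_gamma x).1; exists N.
by have [N xN] := finsupp_delta x; exists N => j /xN dj; rewrite rann_mx_row.
Qed.

Definition rann_gen : RCFM k := RCFMat rann_mx_rcf.

Lemma mulr_rann_gen : a * rann_gen = 0.
Proof. by apply: rcfm_ext => i j; exact: (annv_unitv_gamma j).2 i. Qed.

Lemma rann_gen_mulr x : a * x = 0 -> rann_gen * x = x.
Proof.
move=> ax0; apply: rcfm_ext => i j; rewrite /GRing.mul /= /Defs.mulf.
have -> : (fun l => rann_gen i l * x l j) = (fun l => delta i l * x l j).
  by apply: funext => l; rewrite -rann_mx_row.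
have Kx : annv a (fun l => x l j).
  split=> [|i']; first exact: colf.
  by have := congr1 (fun y : RCFM k => y i' j) ax0.
change (vdot (delta i) (fun l => x l j) = x i j).
have := vdotBr (unitv i) (delta i) Kx.1.
rewrite (annv_perp_unitv_delta i).2 // vdot_unitv.
by move/eqP; rewrite eq_sym subr_eq0 vdotC => /eqP <-.
Qed.

End RightAnnihilator.

Lemma rcfm_rann_split (k : fieldType) : rann_split (RCFM k).
Proof. by move=> a; exists (rann_gen a); split; [exact: mulr_rann_gen | exact: rann_gen_mulr]. Qed.

Theorem corollary7p16 (k : fieldType) (M : rmodType (RCFM k)) :
  rfinitely_presented M -> rpd_le1 M.
Proof.
exact: rfinitely_presented_rpd_le1 (@rcfm_rann_split k) (@rcfm_powers_retract k) M.
Qed.
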